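(* Let $R$ be a commutative ring with identity containing the field $\mathbb{Q}$ of rational numbers as a subring with the same identity (equivalently, every nonzero integer is a unit in $R$). Then $R$ is a u-ring.
   Context: An ideal $I$ of $R$ is a u-ideal if whenever $I\subseteq I_1\cup\cdots\cup I_m$ for finitely many ideals $I_1,\dots,I_m$ of $R$, then $I\subseteq I_j$ for some $j$. A ring $R$ is a u-ring if every ideal of $R$ is a u-ideal. *)

From mathcomp Require Import all_boot all_algebra.
Set Implicit Arguments. Unset Strict Implicit. Unset Printing Implicit Defensive.
Import GRing.Theory.
Local Open Scope ring_scope.

Definition ideal (R : comNzRingType) (I : R -> Prop) : Prop :=
  [/\ I 0,
      (forall x y, I x -> I y -> I (x + y)) &
      (forall a x, I x -> I (a * x))].

Definition u_ideal (R : comNzRingType) (I : R -> Prop) : Prop :=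
  forall (m : nat) (J : 'I_m -> R -> Prop),
    (forall j, ideal (J j)) ->
    (forall x, I x -> exists j, J j x) ->
    exists j, forall x, I x -> J j x.

Definition u_ring (R : comNzRingType) : Prop :=
  forall I : R -> Prop, ideal I -> u_ideal I.

From mathcomp Require Import all_boot all_algebra.
From Stdlib Require Import Classical.
Local Open Scope ring_scope.
Import GRing.Theory.

(* Induction on the number m.+1 of ideals covering I.  If some b in I avoids
   the last ideal J_m, then every a in I lies in one of the first m ideals:
   otherwise a lies in J_m, so none of the m.+1 elements b + k a lies in J_m,
   and by the pigeonhole principle two of them, b + k a and b + k' a, lie in
   the same J_j.  Then (k' - k) a is in J_j, and since k' - k is invertible
   in R, so is a. *)

Definition covers {R : comNzRingType} {m} (J : 'I_m -> R -> Prop) (I : R -> Prop) :=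
  forall x, I x -> exists j, J j x.

Lemma idealB {R : comNzRingType} {I : R -> Prop} {x y : R} :
  ideal I -> I x -> I y -> I (x - y).
Proof. by case=> _ IqD IqM Ix Iy; rewrite -mulN1r in Iy *; apply/IqD/IqM. Qed.

Lemma ord_pigeonhole m (P : 'I_m.+1 -> 'I_m -> Prop) :
  (forall k, exists j, P k j) -> exists j (k k' : 'I_m.+1), [/\ k < k', P k j & P k' j]%N.
Proof.
move=> /fin_all_exists[f Pf].
have /injectivePn[k [k' neq_kk' eq_f]] : ~~ injectiveb f.
  by apply/injectiveP => /leq_card; rewrite !card_ord ltnn.
exists (f k); case: (ltngtP k k') => [lt_kk'|lt_k'k|/val_inj eq_kk'].
- by exists k, k'; rewrite {2}eq_f.
- by exists k', k; rewrite {1}eq_f.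
- by rewrite eq_kk' eqxx in neq_kk'.
Qed.

Section NatInvertible.

Context {R : comNzRingType}.
Hypothesis natr_inv : forall n : nat, (0 < n)%N -> exists y : R, n%:R * y = 1.

Lemma ideal_natmul_cancel {J : R -> Prop} n a :
  ideal J -> (0 < n)%N -> J (n%:R * a) -> J a.
Proof.
case=> _ _ JqM /natr_inv[y ny1] /(JqM y).
by rewrite mulrA (mulrC y) ny1 mul1r.
Qed.

Lemma ideal_arith_prog {J : R -> Prop} {a b : R} {k k' : nat} : ideal J -> (k < k')%N ->
  J (b + k%:R * a) -> J (b + k'%:R * a) -> J a.
Proof.
move=> idJ lt_kk' Jk Jk'.
apply: (ideal_natmul_cancel (k' - k) a idJ); first by rewrite subn_gt0.
have -> : (k' - k)%:R * a = b + k'%:R * a - (b + k%:R * a).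
  by rewrite natrB ?(ltnW lt_kk') // mulrBl opprD addrACA subrr add0r.
exact: idealB.
Qed.

Lemma covers_drop_last {I : R -> Prop} {m} {J : 'I_m.+1 -> R -> Prop} {b : R} :
  ideal I -> (forall j, ideal (J j)) -> covers J I ->
  I b -> ~ J ord_max b -> covers (J \o lift ord_max) I.
Proof.
move=> idI idJ covJ Ib Jb a Ia; have [j] := covJ a Ia.
case: (unliftP ord_max j) => [j' -> | -> Ja]; first by exists j'.
have Ik (k : 'I_m.+1) : I (b + k%:R * a).
  by case: idI => _ IqD IqM; apply/IqD/IqM.
have /ord_pigeonhole[i [k [k' [lt_kk' Jk Jk']]]] :
    forall k : 'I_m.+1, exists j, (J \o lift ord_max) j (b + k%:R * a).
  move=> k; have [i] := covJ _ (Ik k).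
  case: (unliftP ord_max i) => [i' -> | -> Jbk]; first by exists i'.
  case: Jb; have [_ _ JqM] := idJ ord_max.
  by rewrite -(addrK (k%:R * a) b); apply: idealB (JqM _ _ Ja).
by exists i; apply: (ideal_arith_prog (idJ _) lt_kk' Jk Jk').
Qed.

End NatInvertible.

Theorem lemma7 (R : comNzRingType)
  (hQ : forall n : nat, (0 < n)%N -> exists y : R, n%:R * y = 1) :
  u_ring R.
Proof.
move=> I idI m; elim: m => [|m IHm] J idJ covJ.
  by have [I0 _ _] := idI; have [[]] := covJ 0 I0.
case: (classic (forall x, I x -> J ord_max x)) => [J_max|]; first by exists ord_max.
move=> /not_all_ex_not[b /(imply_to_and (I b))[Ib Jb]].
have [j Jj] := IHm _ (fun j => idJ _) (covers_drop_last hQ idI idJ covJ Ib Jb).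
by exists (lift ord_max j).
Qed.
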